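(* Let $n\ge1$, let $G^\star=([n],E^\star)$ be a directed graph (directed cycles allowed), let $S_1=\operatorname{argmin}_{(\mathcal P,\pi)\in\mathcal S}|E^{(1)}_{(\mathcal P,\pi)}|$ and $S_2=\operatorname{argmin}_{(\mathcal P,\pi)\in S_1}|E^{(2)}_{(\mathcal P,\pi)}|$. Then (i) the partially ordered partition associated with $G^\star$ belongs to $S_2$, and (ii) for every $(\mathcal P,\pi)\in S_2$, $E^{(2)}_{(\mathcal P,\pi)}$ equals the set of unshielded conductors in $G^\star$.
   Context: $[n]=\{1,\dots,n\}$. The observed distribution is Markov and faithful to $G^\star$; for distinct $a,b$ and $Z\subseteq[n]\setminus\{a,b\}$, $a\perp\!\!\!\perp b\mid Z$ means $a$ and $b$ are $d$-separated given $Z$ in $G^\star$, and $a\not\perp\!\!\!\perp b\mid Z$ is its negation. In a directed graph, $a$ is an ancestor of $b$ if $a=b$ or there is a directed path from $a$ to $b$. Distinct $a,b$ are $p$-adjacent in a directed graph $G$ if there is an edge between them, or they have a common child which is an ancestor of $a$ or of $b$. A triple $(a,b,c)$ such that $a,c$ are not $p$-adjacent while $a,b$ and $c,b$ are $p$-adjacent is an unshielded conductor if $b$ is an ancestor of $a$ or of $c$, and an unshielded non-conductor otherwise. $\mathcal S$ is the set of pairs $(\mathcal P,\pi)$ with $\mathcal P$ a partition of $[n]$ and $\pi$ a partial order on $\mathcal P$; $C_1\le_\pi C_2$ iff $(C_1,C_2)\in\pi$; $C_{i,\mathcal P}$ is the block containing $i$; $C\le_\pi\max\{C_1,\dots,C_t\}$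 means $C\le_\pi C_i$ for some $i$. The strongly connected components of a directed graph $G$ are the classes of $i\sim j$ iff $i=j$ or there are directed paths $i\to j$ and $j\to i$; on them $C_1\le_G C_2$ iff $C_1=C_2$ or there is a directed path from a vertex of $C_1$ to a vertex of $C_2$. The partially ordered partition associated with $G$ is (its set of strongly connected components, $\le_G$). $E^{(1)}_{(\mathcal P,\pi)}=\{(a,b)\in[n]^2: a\ne b,\ a\not\perp\!\!\!\perp b\mid\bigcup\{C\in\mathcal P: C\le_\pi\max\{C_{a,\mathcal P},C_{b,\mathcal P}\}\}\setminus\{a,b\}\}$. $E^{(2)}_{(\mathcal P,\pi)}$ is the set of $(a,b,c)\in[n]^3$ with $a,b,c$ distinct, $(a,b),(c,b)\in E^{(1)}_{(\mathcal P,\pi)}$, $(a,c)\notin E^{(1)}_{(\mathcal P,\pi)}$ and $C_{b,\mathcal P}\le_\pi\max\{C_{a,\mathcal P},C_{c,\mathcal P}\}$. *)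

From Stdlib Require Import ClassicalDescription.
From mathcomp Require Import all_boot.

Set Implicit Arguments.
Unset Strict Implicit.
Unset Printing Implicit Defensive.

Definition asb (P : Prop) : bool :=
  if excluded_middle_informative P then true else false.

(* The directed graph G* on [n] = 'I_n is given by its edge relation E:
   E a b  <=>  a -> b.  Ancestor (reflexive): connect E a b. *)
Definition ancestor n (E : rel 'I_n) (a b : 'I_n) : bool := connect E a b.

(* A path from a: vertices a :: p (pairwise distinct), together with, for each
   step i, the orientation of the edge used: d_i = true means
   (a::p)_i -> p_i, d_i = false means p_i -> (a::p)_i.
   It is d-connecting given Z if every interior collider is an ancestor of a
   vertex of Z and every interior non-collider is outside Z. *)
Definition d_connecting_path n (E : rel 'I_n) (Z : {set 'I_n})
    (a : 'I_n) (p : seq 'I_n) (d : seq bool) : bool :=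
  [&& size d == size p, uniq (a :: p),
      all (fun i => if nth true d i then E (nth a (a :: p) i) (nth a p i)
                    else E (nth a p i) (nth a (a :: p) i))
          (iota 0 (size p)) &
      all (fun i => let v := nth a p i in
                    if nth true d i && ~~ nth true d i.+1
                    then [exists z in Z, ancestor E v z]
                    else v \notin Z)
          (iota 0 (size p).-1)].

Definition d_connected n (E : rel 'I_n) (Z : {set 'I_n}) (a b : 'I_n) : Prop :=
  exists (p : seq 'I_n) (d : seq bool),
    d_connecting_path E Z a p d /\ last a p = b.

Definition dsep n (E : rel 'I_n) (a b : 'I_n) (Z : {set 'I_n}) : Prop :=
  ~ d_connected E Z a b.

Definition pop n : Type :=
  ({set {set 'I_n}} * {set ({set 'I_n} * {set 'I_n})})%type.

Definition is_pop n (s : pop n) : bool :=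
  let P := s.1 in let pi := s.2 in
  [&& partition P [set: 'I_n],
      pi \subset setX P P,
      [forall C in P, (C, C) \in pi],
      [forall C1 in P, forall C2 in P,
         ((C1, C2) \in pi) && ((C2, C1) \in pi) ==> (C1 == C2)] &
      [forall C1 in P, forall C2 in P, forall C3 in P,
         ((C1, C2) \in pi) && ((C2, C3) \in pi) ==> ((C1, C3) \in pi)]].

Definition Sset n : {set pop n} := [set s : pop n | is_pop s].

Definition lower n (s : pop n) (a b : 'I_n) : {set 'I_n} :=
  \bigcup_(C in s.1 | ((C, pblock s.1 a) \in s.2) || ((C, pblock s.1 b) \in s.2)) C.

Definition E1 n (E : rel 'I_n) (s : pop n) : {set 'I_n * 'I_n} :=
  [set ab : 'I_n * 'I_n | (ab.1 != ab.2) &&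
     asb (~ dsep E ab.1 ab.2 (lower s ab.1 ab.2 :\ ab.1 :\ ab.2))].

Definition E2 n (E : rel 'I_n) (s : pop n) : {set 'I_n * 'I_n * 'I_n} :=
  [set t : 'I_n * 'I_n * 'I_n |
     let a := t.1.1 in let b := t.1.2 in let c := t.2 in
     [&& a != b, b != c, a != c,
         (a, b) \in E1 E s, (c, b) \in E1 E s, (a, c) \notin E1 E s &
         ((pblock s.1 b, pblock s.1 a) \in s.2) ||
         ((pblock s.1 b, pblock s.1 c) \in s.2)]].

Definition S1 n (E : rel 'I_n) : {set pop n} :=
  [set s in Sset n | [forall t in Sset n, #|E1 E s| <= #|E1 E t|]].

Definition S2 n (E : rel 'I_n) : {set pop n} :=
  [set s in S1 E | [forall t in S1 E, #|E2 E s| <= #|E2 E t|]].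

Definition scc_rel n (E : rel 'I_n) (i j : 'I_n) : bool :=
  connect E i j && connect E j i.

Definition sccs n (E : rel 'I_n) : {set {set 'I_n}} :=
  [set [set j | scc_rel E i j] | i : 'I_n].

Definition graph_pop n (E : rel 'I_n) : pop n :=
  (sccs E,
   [set CD in setX (sccs E) (sccs E) |
      (CD.1 == CD.2) || [exists x in CD.1, exists y in CD.2, connect E x y]]).

Definition padj n (E : rel 'I_n) (a b : 'I_n) : bool :=
  (a != b) && [|| E a b, E b a |
    [exists c, [&& E a c, E b c & ancestor E c a || ancestor E c b]]].

Definition uconductors n (E : rel 'I_n) : {set 'I_n * 'I_n * 'I_n} :=
  [set t : 'I_n * 'I_n * 'I_n |
     let a := t.1.1 in let b := t.1.2 in let c := t.2 in
     [&& a != b, b != c, a != c,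
         ~~ padj E a c, padj E a b, padj E c b &
         ancestor E b a || ancestor E b c]].

(* A d-connecting walk can be shortened to a d-connecting path with the same
   endpoints, so it suffices to exhibit walks. P-adjacent vertices are
   d-connected given any set, hence every E1 contains all p-adjacent pairs.
   For the partition into strongly connected components the conditioning set
   of (a, b) is An({a, b}) \ {a, b}; a d-connecting path given it has at most
   two edges and exhibits p-adjacency, so there E1 is exactly the p-adjacent
   pairs and |E1| is minimal. In a minimiser, let (a, b, c) be an unshielded
   conductor with C_b not below C_a or C_c. Then b is outside the conditioning
   set of (a, c), and the walk a - b - c, routed along a directed path from b
   when b is not an ancestor of that set, d-connects a and c; this contradicts
   that a and c are not p-adjacent. So E2 of a minimiser contains the unshielded
   conductors, with equality for the strongly connected components. *)

From Stdlib Require Import ClassicalDescription.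
From mathcomp Require Import all_boot.

Set Implicit Arguments.
Unset Strict Implicit.
Unset Printing Implicit Defensive.

Lemma mem_argmin_card (T U : finType) (A : {set T}) (f : T -> {set U})
    (X : {set U}) t s :
  t \in A -> f t = X -> (forall u, u \in A -> X \subset f u) ->
  (s \in [set s in A | [forall u in A, #|f s| <= #|f u|]]) = (s \in A) && (f s == X).
Proof.
move=> tA ftX Xf; rewrite inE; apply: andb_id2l => sA.
apply/forall_inP/eqP => [/(_ t tA)|-> u /Xf/subset_leq_card //].
by rewrite ftX => fsX; apply/eqP; rewrite eq_sym eqEcard Xf.
Qed.

Lemma asbP (P : Prop) : reflect P (asb P).
Proof. by rewrite /asb; case: excluded_middle_informative => p; constructor. Qed.

Section Walks.
Variables (n : nat) (E : rel 'I_n) (Z : {set 'I_n}).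

(* A walk from [x] is a list of steps [(d, y)], moving to [y] along an edge
   directed away from the current vertex iff [d]. A vertex entered with
   orientation [Some h] and left with [d] is a collider iff [h && ~~ d]; the
   start of a walk is entered with [None] and carries no condition. *)
Definition step_edge (d : bool) x y := if d then E x y else E y x.

Definition anc_of v := [exists z in Z, connect E v z].

Definition passable (o : option bool) (d : bool) x :=
  if o is Some h then if h && ~~ d then anc_of x else x \notin Z else true.

Fixpoint dwalk (o : option bool) x (s : seq (bool * 'I_n)) : bool :=
  if s is (d, y) :: s' then [&& passable o d x, step_edge d x y & dwalk (Some d) y s']
  else true.

Definition walk_end x (s : seq (bool * 'I_n)) := last x (map snd s).

Definition walk_entry o (s : seq (bool * 'I_n)) := last o [seq Some st.1 | st <- s].

Lemma anc_of_mem v : v \in Z -> anc_of v.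
Proof. by move=> vZ; apply/existsP; exists v; rewrite vZ connect0. Qed.

Lemma anc_of_connect u v : connect E u v -> anc_of v -> anc_of u.
Proof.
move=> uv /existsP[z /andP[zZ vz]]; apply/existsP; exists z.
by rewrite zZ (connect_trans uv vz).
Qed.

Lemma passable_collider h d x : x \in Z -> passable (Some h) d x -> h && ~~ d.
Proof. by rewrite /passable; case: (h && ~~ d) => // ->. Qed.

Lemma dwalk_cat o x s1 s2 :
  dwalk o x (s1 ++ s2) = dwalk o x s1 && dwalk (walk_entry o s1) (walk_end x s1) s2.
Proof. by elim: s1 o x => [|[d y] s1 IH] o x //=; rewrite IH !andbA. Qed.

Lemma walk_end_cons x d y s : walk_end x ((d, y) :: s) = walk_end y s.
Proof. by []. Qed.

Lemma walk_end_cat x s1 s2 : walk_end x (s1 ++ s2) = walk_end (walk_end x s1) s2.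
Proof. by rewrite /walk_end map_cat last_cat. Qed.

Lemma walk_entry_cons o d y s :
  walk_entry o ((d, y) :: s) = Some (last d (map fst s)).
Proof. by rewrite /walk_entry /= -(last_map Some) -map_comp. Qed.

(* Leaving a non-ancestor of [Z] forwards, a walk can never turn back: the turn
   would be a collider outside the ancestors of [Z]. *)
Lemma dwalk_forward y s : dwalk (Some true) y s -> ~~ anc_of y ->
  connect E y (walk_end y s) /\ last true (map fst s).
Proof.
elim: s y => [|[[] y1] s IH] y /=; first by rewrite connect0.
  move=> /and3P[_ yy1 W] ny.
  have [] := IH _ W; first by apply: contra ny; apply/anc_of_connect/connect1.
  by split=> //; apply: connect_trans (connect1 yy1) _.
by rewrite /passable /= => /andP[->].
Qed.

Lemma passable_shortcut o d d' h x :
  passable o d' x -> passable (Some h) d x -> (d' -> ~~ anc_of x -> h) ->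
  passable o d x.
Proof.
case: o => [h'|] //; rewrite /passable; have := @anc_of_mem x.
by case: h' h d d' => [] [] [] [] /=; case: (x \in Z); case: (anc_of x) => //=; auto.
Qed.

(* When the loop leaves a non-ancestor [x] of [Z] forwards, it also returns to
   [x] forwards, so [x] keeps its passability once the loop is cut out. *)
Lemma dwalk_shortcut o x s1 s2 :
  dwalk o x (s1 ++ s2) -> s1 != [::] -> walk_end x s1 = x -> dwalk o x s2.
Proof.
case: s1 => [//|[d' y] s1]; rewrite dwalk_cat walk_entry_cons.
move=> /andP[/= /and3P[px xy W1] W2] _ ex; move: W2; rewrite ex.
case: s2 => [//|[d z] s2] /and3P[pxl xz W2]; apply/and3P; split=> //.
apply: passable_shortcut px pxl _ => d'T nx; move: xy W1; rewrite d'T => xy W1.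
by have [] := dwalk_forward W1 (contra (anc_of_connect (connect1 xy)) nx).
Qed.

Lemma split_walk_at x s : x \in map snd s ->
  exists s1 s2, [/\ s = s1 ++ s2, s1 != [::] & walk_end x s1 = x].
Proof.
case/mapP=> [[d y] ys ->] /=; case/splitPr: ys => s1 s2.
exists (rcons s1 (d, y)), s2; rewrite cat_rcons; split=> //; first by case: s1.
by rewrite /walk_end map_rcons last_rcons.
Qed.

Lemma dwalk_uniq o x s : dwalk o x s -> x != walk_end x s ->
  exists s', [/\ dwalk o x s', uniq (x :: map snd s'), walk_end x s' = walk_end x s
             & {subset map snd s' <= map snd s}].
Proof.
elim: {s}(size s).+1 {-2}s (ltnSn (size s)) o x => [//|m IH] s sz o x W nx.
have [xs|xs] := boolP (x \in map snd s).
  have [s1 [s2 [def ne ex]]] := split_walk_at xs.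
  have W2 : dwalk o x s2 by apply: (dwalk_shortcut _ ne ex); rewrite -def.
  have e2 : walk_end x s = walk_end x s2 by rewrite def walk_end_cat ex.
  have sz2 : size s2 < m.
    rewrite -ltnS (leq_trans _ sz) // ltnS def size_cat -{1}[size s2]add0n.
    by rewrite ltn_add2r lt0n size_eq0.
  have [|t [Wt ut et st]] := IH s2 sz2 o x W2; first by rewrite -e2.
  exists t; split=> // [|v /st]; first by rewrite et.
  by rewrite def map_cat mem_cat => ->; rewrite orbT.
case: s sz W nx xs => [|[d y] s] sz /=; first by rewrite eqxx.
move=> /and3P[px xy W] nx; rewrite inE negb_or => /andP[neq_xy xs].
have [ey|ney] := eqVneq y (walk_end y s).
  exists [:: (d, y)]; split=> //=; first by rewrite px xy.
    by rewrite inE neq_xy.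
  by move=> v; rewrite !inE => ->.
have [t [Wt ut et st]] := IH s sz _ _ W ney.
exists ((d, y) :: t); split=> /=; first by rewrite px xy.
- move: ut => /= ->; rewrite inE negb_or neq_xy andbT; apply: contra xs; exact: st.
- exact: et.
- by move=> v; rewrite !inE => /orP[->|/st ->]; rewrite ?orbT.
Qed.

Fixpoint rev_walk x (s : seq (bool * 'I_n)) : seq (bool * 'I_n) :=
  if s is (d, y) :: s' then rcons (rev_walk y s') (~~ d, x) else [::].

Lemma walk_end_rev x s : walk_end (walk_end x s) (rev_walk x s) = x.
Proof. by case: s => [|[d y] s] //=; rewrite /walk_end map_rcons last_rcons. Qed.

Lemma walk_entry_rev o x d y s : walk_entry o (rev_walk x ((d, y) :: s)) = Some (~~ d).
Proof. by rewrite /walk_entry /= map_rcons last_rcons. Qed.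

Lemma passable_rev h d x : passable (Some (~~ d)) (~~ h) x = passable (Some h) d x.
Proof. by rewrite /passable negbK andbC. Qed.

Lemma dwalk_rev o x s : dwalk o x s -> dwalk None (walk_end x s) (rev_walk x s).
Proof.
elim: s o x => [|[d y] s IH] o x // /and3P[_ xy W].
rewrite walk_end_cons [rev_walk _ _]/= -cats1 dwalk_cat (IH _ _ W) walk_end_rev.
rewrite /= andbT.
apply/andP; split; last by case: (d) xy.
by case: s W {IH} => [|[d' y'] s] //= /andP[pyl _]; rewrite walk_entry_rev passable_rev.
Qed.

Lemma dwalk_path o u p : path E u p -> ~~ anc_of u ->
  dwalk o u [seq (true, v) | v <- p] /\ walk_end u [seq (true, v) | v <- p] = last u p.
Proof.
elim: p o u => [|y p IH] o u //= /andP[uy P] nu.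
have [W e] := IH (Some true) y P (contra (anc_of_connect (connect1 uy)) nu).
split; last exact: e.
rewrite uy W andbT /passable.
by case: o => // h; rewrite andbF (contra (@anc_of_mem u) nu).
Qed.

Lemma dwalk_ancestors o x s : dwalk o x s -> forall v, v \in map snd s ->
  [|| anc_of v, connect E v x | connect E v (walk_end x s)].
Proof.
elim: s o x => [|[d y] s IH] o x //= /and3P[_ xy W].
have Hy : [|| anc_of y, connect E y x | connect E y (walk_end y s)].
  case: d xy W => /= xy W; last by rewrite (connect1 xy) orbT.
  have [//|ny] := boolP (anc_of y).
  by have [-> _] := dwalk_forward W ny; rewrite !orbT.
move=> v; rewrite inE => /predU1P[->|vs]; first exact: Hy.
case/or3P: (IH _ _ W v vs) => [->//|vy|->]; last by rewrite !orbT.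
case/or3P: Hy => [Ay|yx|yl].
- by rewrite (anc_of_connect vy Ay).
- by rewrite (connect_trans vy yx) orbT.
- by rewrite (connect_trans vy yl) !orbT.
Qed.

Definition nth_edges a (s : seq (bool * 'I_n)) :=
  all (fun i => step_edge (nth true (map fst s) i) (nth a (a :: map snd s) i)
                          (nth a (map snd s) i))
      (iota 0 (size s)).

Definition nth_passable a (s : seq (bool * 'I_n)) :=
  all (fun i => passable (Some (nth true (map fst s) i)) (nth true (map fst s) i.+1)
                         (nth a (map snd s) i))
      (iota 0 (size s).-1).

Lemma all_iota0S (f : pred nat) k :
  all f (iota 0 k.+1) = f 0 && all (fun i => f i.+1) (iota 0 k).
Proof. by rewrite /= -add1n iotaDl all_map. Qed.

Lemma nth_edges_cons a d y s :
  nth_edges a ((d, y) :: s) = step_edge d a y && nth_edges y s.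
Proof.
rewrite /nth_edges [size _]/= all_iota0S; congr (_ && _); apply: eq_in_all => i.
rewrite mem_iota leq0n add0n andTb => lt_is /=.
by congr step_edge; apply: set_nth_default; rewrite /= size_map // ltnW.
Qed.

Lemma nth_passable_cons a d y s :
  nth_passable a ((d, y) :: s) =
  (if s is (d', _) :: _ then passable (Some d) d' y else true) && nth_passable y s.
Proof.
case: s => [//|[d' y'] s]; rewrite /nth_passable all_iota0S; congr (_ && _).
apply: eq_in_all => i; rewrite mem_iota leq0n add0n andTb => lt_is.
by rewrite (set_nth_default y a) //= size_map ltnW.
Qed.

Lemma dwalk_nth o a s :
  dwalk o a s = [&& if s is (d, _) :: _ then passable o d a else true,
                    nth_edges a s & nth_passable a s].
Proof.
elim: s o a => [|[d y] s IH] o a //=.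
rewrite IH nth_edges_cons nth_passable_cons.
case: s {IH} => [|[d' y'] s] /=; first by rewrite /nth_edges /nth_passable /= !andbT.
by case: (nth_edges y _); rewrite /= ?andbF ?andbT.
Qed.

Lemma d_connecting_pathE a s :
  d_connecting_path E Z a (map snd s) (map fst s) =
  uniq (a :: map snd s) && dwalk None a s.
Proof.
by rewrite dwalk_nth /d_connecting_path !size_map eqxx; case: s => [|[d y] s].
Qed.

End Walks.

Section WalkConnection.
Variables (n : nat) (E : rel 'I_n) (Z : {set 'I_n}).

Definition walk_connected a b := exists2 s, dwalk E Z None a s & walk_end a s = b.

Lemma d_connected_walk a b : a != b -> walk_connected a b -> d_connected E Z a b.
Proof.
move=> ab [s W eb]; have [|t [Wt ut et _]] := dwalk_uniq W; first by rewrite eb.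
exists (map snd t), (map fst t); split; last by rewrite -eb -et.
by rewrite d_connecting_pathE ut.
Qed.

Lemma d_connected_simple_walk a b : d_connected E Z a b ->
  exists s, [/\ uniq (a :: map snd s), dwalk E Z None a s & walk_end a s = b].
Proof.
case=> p [d [D <-]]; have sz : size d = size p by case/and4P: D => /eqP.
have e1 : map fst (zip d p) = d by apply: unzip1_zip; rewrite sz.
have e2 : map snd (zip d p) = p by apply: unzip2_zip; rewrite sz.
exists (zip d p); move: D; rewrite -{1}e1 -{1}e2 d_connecting_pathE => /andP[U W].
by split=> //; rewrite /walk_end e2.
Qed.

Lemma walk_connected_sym a b : walk_connected a b -> walk_connected b a.
Proof.
by case=> s W <-; exists (rev_walk a s); [apply: dwalk_rev W | apply: walk_end_rev].
Qed.

Lemma walk_connected_extend a b c s : dwalk E Z None a s -> walk_end a s = b ->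
  (forall d, passable E Z (walk_entry None s) d b) -> walk_connected b c ->
  walk_connected a c.
Proof.
move=> W eb pb [t Wt <-]; exists (s ++ t); last by rewrite walk_end_cat eb.
rewrite dwalk_cat W eb; case: t Wt => [//|[d y] t] /and3P[_ by_ Wt].
by rewrite /= pb by_.
Qed.

Lemma walk_connected_edge_path x w y :
  E x w -> connect E w y -> ~~ anc_of E Z w -> walk_connected x y.
Proof.
move=> xw /connectP[p P ->] nw; have [W ep] := dwalk_path (Some true) P nw.
by exists ((true, w) :: [seq (true, v) | v <- p]); [rewrite /= xw W | exact: ep].
Qed.

Lemma padj_walk_connected a b : padj E a b -> walk_connected a b.
Proof.
case/andP=> _ /or3P[ab|ba|/existsP[w /and3P[aw bw anc]]].
- by exists [:: (true, b)]; rewrite //= ab.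
- by exists [:: (false, b)]; rewrite //= ba.
have [Aw|nw] := boolP (anc_of E Z w).
  by exists [:: (true, w); (false, b)]; rewrite //= aw bw /passable /= Aw.
case/orP: anc => anc; last exact: walk_connected_edge_path aw anc nw.
by apply/walk_connected_sym/(walk_connected_edge_path bw anc nw).
Qed.

(* If [b] is not an ancestor of [Z], reach it from [a] backwards along a
   directed path [b ->* a]: then [b] is not a collider and [b \notin Z] lets
   the walk through. *)
Lemma conductor_walk_connected a b c :
  padj E a b -> padj E c b -> connect E b a || connect E b c -> b \notin Z ->
  walk_connected a c.
Proof.
wlog ba : a c / connect E b a => [wlog pab pcb /orP[ba|bc] bZ|].
  by apply: wlog; rewrite ?ba.
  by apply/walk_connected_sym/wlog; rewrite ?bc ?orbT.
move=> pab pcb _ bZ; have bc := walk_connected_sym (padj_walk_connected pcb).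
have [Ab|nb] := boolP (anc_of E Z b).
  have [s W eb] := padj_walk_connected pab; apply: (walk_connected_extend W eb) bc.
  by move=> d; rewrite /passable; case: walk_entry => // h; rewrite Ab bZ if_same.
case/connectP: ba => p P la; have [W eb] := dwalk_path None P nb.
have p_ne : p != [::] by case: p la {P W eb} => // ab; move: pab; rewrite ab /padj eqxx.
have Wr := dwalk_rev W; rewrite eb -la in Wr.
have er := walk_end_rev b [seq (true, v) | v <- p]; rewrite eb -la in er.
apply: (walk_connected_extend Wr er) bc.
by case: p p_ne {P W eb la Wr er} => // v p _ d; rewrite [map _ _]/= walk_entry_rev.
Qed.

Section AncestralConditioning.
Variables a b : 'I_n.
Hypothesis Z_ancestral :
  forall v, (v \in Z) = [&& v != b, v != a & connect E v a || connect E v b].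

Lemma dwalk_ancestral_inner s : dwalk E Z None a s -> walk_end a s = b ->
  {in map snd s, forall v, v != a -> v != b -> v \in Z}.
Proof.
move=> W eb v vs va vb; rewrite Z_ancestral va vb /=.
case/or3P: (dwalk_ancestors W vs) => [|->//|]; last by rewrite eb => ->; rewrite orbT.
case/existsP=> z /andP[]; rewrite Z_ancestral => /and3P[_ _ /orP[] za] vz.
  by rewrite (connect_trans vz za).
by rewrite (connect_trans vz za) orbT.
Qed.

(* The second vertex [y] of a d-connecting path lies in [Z], so it is a
   collider [a -> y <- y']; were [y'] not [b], it would be an inner vertex in
   [Z] entered backwards. *)
Lemma d_connected_ancestral_padj : a != b -> d_connected E Z a b -> padj E a b.
Proof.
move=> ab /d_connected_simple_walk[s [U W eb]].
have inner_Z := dwalk_ancestral_inner W eb.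
case: s U W eb inner_Z => [|[d y] s] U W eb inner_Z; first by rewrite -eb eqxx in ab.
case/and3P: W => _ ay W; case: s U W eb inner_Z => [|[d' y'] s] U W eb inner_Z.
  have {eb} ey : y = b := eb; subst b.
  by rewrite /padj ab; case: d ay {U W inner_Z} => /= ->; rewrite ?orbT.
have b_last : b \in y' :: map snd s by rewrite -eb /walk_end /= mem_last.
move: U => /= /and4P[a_new y_new y'_new _].
have ya : y != a by apply: contraNneq a_new => <-; rewrite mem_head.
have yb : y != b by apply: contraNneq y_new => ->.
have yZ : y \in Z by rewrite inner_Z ?mem_head.
case/and3P: W => /(passable_collider yZ)/andP[d_fwd d'_bwd] yy' W; clear y_new b_last.
case: s a_new W eb y'_new inner_Z => [|[d2 y2] s] a_new W eb y'_new inner_Z.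
  have {eb} ey' : y' = b := eb; subst b.
  rewrite /padj ab; apply/or3P/Or33/existsP; exists y.
  move: ay yy' yZ; rewrite d_fwd (negbTE d'_bwd) Z_ancestral => /= -> -> /and3P[_ _].
  by rewrite /ancestor orbC.
have y'a : y' != a by apply: contraNneq a_new => <-; rewrite !inE eqxx orbT.
have y'b : y' != b by apply: contraNneq y'_new => ->; rewrite -eb /walk_end /= mem_last.
have y'Z : y' \in Z by rewrite inner_Z // !inE eqxx orbT.
by case/and3P: W; rewrite (negbTE d'_bwd) /passable /= y'Z.
Qed.

End AncestralConditioning.

End WalkConnection.

Section StronglyConnectedComponents.
Variables (n : nat) (E : rel 'I_n).

Definition scc_of x := [set y | scc_rel E x y].

Lemma scc_rel_equivalence : equivalence_rel (scc_rel E).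
Proof.
move=> x y z; split; first by rewrite /scc_rel connect0.
case/andP=> xy yx; apply/andP/andP => -[xz zx]; split.
- exact: connect_trans yx xz.
- exact: connect_trans zx xy.
- exact: connect_trans xy xz.
- exact: connect_trans zx yx.
Qed.

Lemma sccsE : sccs E = equivalence_partition (scc_rel E) [set: 'I_n].
Proof.
by apply/setP => C; apply/imsetP/imsetP => -[x _ ->]; exists x => //;
  apply/setP => y; rewrite !inE.
Qed.

Lemma partition_sccs : partition (sccs E) [set: 'I_n].
Proof.
rewrite sccsE; apply: equivalence_partitionP => x y z _ _ _.
exact: scc_rel_equivalence.
Qed.

Lemma pblock_sccs x : pblock (sccs E) x = scc_of x.
Proof.
apply/setP => y; rewrite sccsE inE pblock_equivalence_partition // => ? ? ? _ _ _.
exact: scc_rel_equivalence.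
Qed.

Lemma mem_scc_of x : x \in scc_of x.
Proof. by rewrite inE /scc_rel connect0. Qed.

Lemma sccsP C : reflect (exists x, C = scc_of x) (C \in sccs E).
Proof. by apply: (iffP imsetP) => [[x _ ->]|[x ->]]; exists x. Qed.

Lemma scc_of_sccs x : scc_of x \in sccs E.
Proof. by apply/sccsP; exists x. Qed.

Lemma graph_pop_le x y : ((scc_of x, scc_of y) \in (graph_pop E).2) = connect E x y.
Proof.
rewrite !inE !scc_of_sccs /=; apply/idP/idP => [|xy].
  case/orP=> [/eqP exy|/existsP[u /andP[xu /existsP[v /andP[yv uv]]]]].
    by move: (mem_scc_of y); rewrite -exy inE => /andP[].
  move: xu yv; rewrite !inE => /andP[xu _] /andP[_ vy].
  exact: connect_trans xu (connect_trans uv vy).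
apply/orP; right; apply/existsP; exists x; rewrite mem_scc_of /=.
by apply/existsP; exists y; rewrite mem_scc_of.
Qed.

Lemma is_pop_graph_pop : is_pop (graph_pop E).
Proof.
apply/and5P; split; first exact: partition_sccs.
- by apply/subsetP => CD; rewrite inE => /andP[].
- by apply/forall_inP => _ /sccsP[x ->]; rewrite graph_pop_le connect0.
- apply/forall_inP => _ /sccsP[x ->]; apply/forall_inP => _ /sccsP[y ->].
  rewrite !graph_pop_le; apply/implyP => /andP[xy yx].
  by apply/eqP/setP => z; rewrite !inE; apply: (scc_rel_equivalence x y z).2; apply/andP.
- apply/forall_inP => _ /sccsP[x ->]; apply/forall_inP => _ /sccsP[y ->].
  apply/forall_inP => _ /sccsP[z ->]; rewrite !graph_pop_le.
  by apply/implyP => /andP[]; apply: connect_trans.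
Qed.

Lemma lower_graph_pop a b :
  lower (graph_pop E) a b = [set v | connect E v a || connect E v b].
Proof.
apply/setP => v; rewrite inE /lower /= !pblock_sccs; apply/bigcupP/idP.
  case=> _ /andP[/sccsP[u ->]]; rewrite !graph_pop_le inE => ua /andP[_ vu].
  by case/orP: ua => uab; rewrite (connect_trans vu uab) ?orbT.
by move=> vab; exists (scc_of v); rewrite ?mem_scc_of // scc_of_sccs !graph_pop_le.
Qed.

End StronglyConnectedComponents.

Section Minimisers.
Variables (n : nat) (E : rel 'I_n).

Lemma E1P (s : pop n) a b :
  reflect (a != b /\ d_connected E (lower s a b :\ a :\ b) a b) ((a, b) \in E1 E s).
Proof.
rewrite inE; apply: (iffP andP) => -[ab dc]; split=> //.
  by apply: NNPP; apply/asbP.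
by apply/asbP => /(_ dc).
Qed.

Lemma Sset_trivIset (s : pop n) : s \in Sset n -> trivIset s.1.
Proof. by rewrite inE => /and5P[/and3P[]]. Qed.

Lemma graph_pop_Sset : graph_pop E \in Sset n.
Proof. by rewrite inE is_pop_graph_pop. Qed.

Definition padj_pairs := [set ab : 'I_n * 'I_n | padj E ab.1 ab.2].

Lemma padj_pairs_sub_E1 (s : pop n) : padj_pairs \subset E1 E s.
Proof.
apply/subsetP => -[a b]; rewrite inE /= => pab; have /andP[ab _] := pab.
by apply/E1P; split=> //; apply/d_connected_walk/padj_walk_connected.
Qed.

Lemma E1_graph_pop : E1 E (graph_pop E) = padj_pairs.
Proof.
apply/eqP; rewrite eqEsubset padj_pairs_sub_E1 andbT.
apply/subsetP => -[a b] /E1P[ab dc]; rewrite inE.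
by apply: (d_connected_ancestral_padj _ ab dc) => v; rewrite lower_graph_pop !inE.
Qed.

Lemma uconductors_sub_E2 (s : pop n) :
  trivIset s.1 -> E1 E s = padj_pairs -> uconductors E \subset E2 E s.
Proof.
move=> triv E1s; apply/subsetP => -[[a b] c]; rewrite !inE /=.
case/and3P=> ab bc /and3P[ac nac /and3P[pab pcb anc]].
rewrite ab bc ac E1s !inE /= pab pcb nac /=; apply/negPn/negP => not_le.
have bZ : b \notin lower s a c :\ a :\ c.
  apply: contra not_le => /setD1P[_ /setD1P[_ /bigcupP[C /andP[Cs le] bC]]].
  by rewrite (def_pblock triv Cs bC).
have dc := d_connected_walk ac (conductor_walk_connected pab pcb anc bZ).
have : (a, c) \in E1 E s by apply/E1P.
by rewrite E1s inE /= (negbTE nac).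
Qed.

Lemma E2_graph_pop : E2 E (graph_pop E) = uconductors E.
Proof.
apply/setP => -[[a b] c]; rewrite !inE /= !pblock_sccs !graph_pop_le E1_graph_pop !inE /=.
by case: (padj E a b); case: (padj E c b); case: (padj E a c); rewrite /= ?andbF.
Qed.

End Minimisers.

Theorem proposition3p9 (n : nat) (hn : 0 < n) (E : rel 'I_n) :
  graph_pop E \in S2 E /\
  (forall s : pop n, s \in S2 E -> E2 E s = uconductors E).
Proof.
have S1E s : (s \in S1 E) = (s \in Sset n) && (E1 E s == padj_pairs E).
  apply: mem_argmin_card (graph_pop_Sset E) (E1_graph_pop E) _ => t _.
  exact: padj_pairs_sub_E1.
have S2E s : (s \in S2 E) = (s \in S1 E) && (E2 E s == uconductors E).
  apply: mem_argmin_card _ (E2_graph_pop E) _.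
    by rewrite S1E graph_pop_Sset E1_graph_pop eqxx.
  by move=> t; rewrite S1E => /andP[/Sset_trivIset triv /eqP]; exact: uconductors_sub_E2.
split; first by rewrite S2E S1E graph_pop_Sset E1_graph_pop E2_graph_pop !eqxx.
by move=> s; rewrite S2E => /andP[_ /eqP].
Qed.
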